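(* For any $\epsilon>0$ and $N$ sufficiently large, there exists $\delta\in(0,\epsilon)$ such that for all $\bm\sigma\in S_N^n$ and $\bm\omega\in(\mathbb{R}^M)^n$ for which $\Psi(\bm\sigma,\bm\omega)$ is defined, $$\mathbf 1_{Q^\epsilon_{M+N}}\big(\Psi(\bm\sigma,\bm\omega)\big)\ge\mathbf 1_{Q^\epsilon_N}(\bm\sigma)\,\mathbf 1_{\Omega^{\epsilon/2,\delta}_M}(\bm\omega).$$
   Context: $n\ge1$, $M\ge1$ fixed. $S_K$ = sphere of radius $\sqrt K$ in $\mathbb{R}^K$. Overlap of $\bm\sigma,\bm\sigma'\in(\mathbb{R}^K)^n$: $\bm R(\bm\sigma,\bm\sigma')=(\frac1K\sum_{i\le K}\sigma_i(j)\sigma'_i(j'))_{j,j'\le n}$. $\bm Q$ is a symmetric positive semidefinite $n\times n$ matrix with unit diagonal; $Q^\epsilon_K=\{\bm\sigma\in S_K^n:\|\bm R(\bm\sigma,\bm\sigma)-\bm Q\|_\infty\le\epsilon\}$ (max-entry norm). For $\bm\omega(j)\in\mathbb{R}^M$ write $\bm\omega(j)=s_j\bm\tau(j)$ with $s_j=\|\bm\omega(j)\|/\sqrt M$ and $\bm\tau(j)\in S_M$; $\Omega^{\epsilon/2,\delta}_M=\{(s_j\bm\tau(j))_{j\le n}:\bm\tau\in Q^{\epsilon/2}_M,\ s_j\in[\sqrt{1-\delta},\sqrt{1+\delta}]\ \forall j\}$. For $\bm x\in\mathbb{R}^M$, $a_1(\bm x)=1$ and $a_\ell(\bm x)=\prod_{j=1}^{\ell-1}\sqrt{1+\frac{1-x_j^2}{M+N-j}}$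 for $1<\ell\le M+1$. For $\bm\sigma\in S_N$, $\bm\omega\in\mathbb{R}^M$, $\psi(\bm\sigma,\bm\omega)=(\sigma_1a_{M+1}(\bm\omega),\dots,\sigma_Na_{M+1}(\bm\omega),\omega_1a_1(\bm\omega),\dots,\omega_Ma_M(\bm\omega))$, and $\Psi(\bm\sigma,\bm\omega)=(\psi(\bm\sigma(j),\bm\omega(j)))_{j\le n}$ for $\bm\sigma\in S_N^n$, $\bm\omega\in(\mathbb{R}^M)^n$. *)

From HB Require Import structures.
From mathcomp Require Import all_boot all_order all_algebra.
From mathcomp Require Import reals.
Set Implicit Arguments. Unset Strict Implicit. Unset Printing Implicit Defensive.
Import Order.TTheory GRing.Theory Num.Theory.
Local Open Scope ring_scope.

Section Defs.
Variable R : realType.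

(* A configuration (σ(1),...,σ(n)) ∈ (R^K)^n is an n×K matrix whose j-th row is σ(j). *)

Definition on_sphere (K : nat) (x : 'rV[R]_K) : Prop :=
  \sum_(i < K) (x 0 i) ^+ 2 = K%:R.

Definition overlap (n K : nat) (s s' : 'M[R]_(n, K)) : 'M[R]_n :=
  (K%:R)^-1 *: (s *m s'^T).

(* Q^eps_K = { σ ∈ S_K^n : || R(σ,σ) - Q ||_∞ <= eps } (max-entry norm). *)
Definition Qset (n K : nat) (eps : R) (Q : 'M[R]_n) (s : 'M[R]_(n, K)) : Prop :=
  (forall j, on_sphere (row j s)) /\
  (forall j j', `|overlap s s j j' - Q j j'| <= eps).

Definition Omega_set (n M : nat) (eps delta : R) (Q : 'M[R]_n) (w : 'M[R]_(n, M)) : Prop :=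
  exists (tau : 'M[R]_(n, M)) (s : 'I_n -> R),
    Qset (eps / 2) Q tau /\
    (forall j, Num.sqrt (1 - delta) <= s j <= Num.sqrt (1 + delta)) /\
    (forall j i, w j i = s j * tau j i).

(* The j-th factor (j = i+1, 1-based) inside a_l: 1 + (1 - x_j^2)/(M+N-j). *)
Definition a_arg (M N : nat) (x : 'rV[R]_M) (i : 'I_M) : R :=
  1 + (1 - (x 0 i) ^+ 2) / ((M + N)%:R - (i.+1)%:R).

Definition a_coef (M N : nat) (l : nat) (x : 'rV[R]_M) : R :=
  \prod_(i < M | (i.+1 < l)%N) Num.sqrt (a_arg N x i).

Definition psi (N M : nat) (s : 'rV[R]_N) (w : 'rV[R]_M) : 'rV[R]_(N + M) :=
  row_mx (a_coef N M.+1 w *: s) (\row_(i < M) (w 0 i * a_coef N i.+1 w)).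

Definition Psi (n N M : nat) (s : 'M[R]_(n, N)) (w : 'M[R]_(n, M)) : 'M[R]_(n, N + M) :=
  \matrix_(j < n, k < N + M) psi (row j s) (row j w) 0 k.

(* Ψ(σ,ω) is defined: every square-root argument occurring in a_1..a_{M+1}(ω(j)) is >= 0. *)
Definition Psi_defined (n N M : nat) (w : 'M[R]_(n, M)) : Prop :=
  forall (j : 'I_n) (i : 'I_M), 0 <= a_arg N (row j w) i.

Definition psd (n : nat) (Q : 'M[R]_n) : Prop :=
  forall v : 'rV[R]_n, 0 <= (v *m Q *m v^T) 0 0.

End Defs.

(* Write b_k(x) := a_{k+1}(x)^2 = prod_{i<k} (1 + (1 - x_i^2)/(M+N-i-1)).  Since
   b_{k+1} - b_k = b_k (1 - x_k^2)/(M+N-k-1), the quantity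
   sum_{i<k} x_i^2 b_i + (M+N-k) b_k is constant in k, equal to M+N; at k = M this
   is exactly |psi(sigma,omega)|^2 when |sigma|^2 = N, so Psi maps onto the sphere
   whatever omega is.  For the overlaps, omega in Omega forces x_i^2 <= 2M, so each
   factor of b_k is 1 + O(1/N) and b_k = 1 + O(1/N); the same identity at k = M even
   gives N (b_M - 1) = M (1 - s^2) + O(1).  Hence the sigma-block of the overlap of
   Psi moves by O(M (delta + 1/N)) and the omega-block by the same amount, both of
   which fit in the slack M eps/2 left by tau in Q^{eps/2}. *)

From HB Require Import structures.
From mathcomp Require Import all_boot all_order all_algebra.
From mathcomp Require Import reals.
From mathcomp Require Import ring lra zify.
Set Implicit Arguments. Unset Strict Implicit. Unset Printing Implicit Defensive.
Import Order.TTheory GRing.Theory Num.Theory.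
Local Open Scope ring_scope.

Section RealFacts.
Variable R : realFieldType.

Lemma norm_prodB1_le (I : Type) (r : seq I) (P : pred I) (f : I -> R) (t : R) :
  0 <= t <= 1 -> (forall i, `|f i - 1| <= t) ->
  `|\prod_(i <- r | P i) f i - 1| <= (size r)%:R * t * 2 ^+ size r.
Proof.
move=> /andP[t_ge0 t_le1] f_close.
elim: r => [|i r IH]; first by rewrite big_nil subrr normr0 !mul0r.
rewrite big_cons /= -natr1 exprS.
set p := \prod_(j <- r | P j) f j in IH *; set m := size r in IH *.
have m_ge0 : 0 <= m%:R :> R by [].
have pow_ge1 : 1 <= 2 ^+ m :> R by apply: exprn_ege1; lra.
have B_ge0 : 0 <= m%:R * t * 2 ^+ m by rewrite !mulr_ge0 // ?exprn_ge0.
case: (P i); last by nra.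
have -> : f i * p - 1 = (f i - 1) * p + (p - 1) by ring.
have p_le : `|p| <= 1 + m%:R * t * 2 ^+ m.
  by rewrite -[p](subrK 1) addrC; apply: le_trans (ler_normD _ _) _; rewrite normr1 lerD2l.
apply: le_trans (ler_normD _ _) _; rewrite normrM.
have := ler_pM (normr_ge0 _) (normr_ge0 _) (f_close i) p_le.
nra.
Qed.

Lemma normB1_le_sqr (z : R) : 0 <= z -> `|z - 1| <= `|z ^+ 2 - 1|.
Proof.
move=> z_ge0; have -> : z ^+ 2 - 1 = (z - 1) * (z + 1) by ring.
by rewrite normrM ler_peMr // ger0_norm; lra.
Qed.

Lemma normMB1_le (b c : R) :
  `|b * c - 1| <= `|b - 1| + `|c - 1| + `|b - 1| * `|c - 1|.
Proof.
have -> : b * c - 1 = (b - 1) + (c - 1) + (b - 1) * (c - 1) by ring.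
rewrite -normrM; apply: le_trans (ler_normD _ _) _.
by rewrite lerD2r; apply: ler_normD.
Qed.

Lemma normM_le_sqr (a b : R) : `|a * b| <= (a ^+ 2 + b ^+ 2) / 2.
Proof.
rewrite normrM ler_pdivlMr; last lra.
rewrite -[a ^+ 2]real_normK ?num_real // -[b ^+ 2]real_normK ?num_real //.
have := sqr_ge0 (`|a| - `|b|); nra.
Qed.

Lemma sum_normM_le K (u v : 'I_K -> R) :
  \sum_(i < K) `|u i * v i| <= (\sum_(i < K) u i ^+ 2 + \sum_(i < K) v i ^+ 2) / 2.
Proof.
rewrite -big_split mulr_suml /=; apply: ler_sum => i _; exact: normM_le_sqr.
Qed.

Lemma ler_norm_invMB (K X q b : R) : 0 < K ->
  (`|K^-1 * X - q| <= b) = (`|X - K * q| <= K * b).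
Proof.
move=> K_gt0; have -> : X - K * q = K * (K^-1 * X - q) by field; lra.
by rewrite normrM gtr0_norm // ler_pM2l.
Qed.

End RealFacts.

Lemma big_ord_ltS (R : Type) (idx : R) (op : Monoid.com_law idx) m (F : 'I_m -> R)
    k (k_lt_m : (k < m)%N) :
  \big[op/idx]_(i < m | (i < k.+1)%N) F i =
  op (\big[op/idx]_(i < m | (i < k)%N) F i) (F (Ordinal k_lt_m)).
Proof.
rewrite (bigD1 (Ordinal k_lt_m)) //= Monoid.mulmC; congr (op _ _).
by apply: eq_bigl => i; rewrite -val_eqE /= ltnS; case: ltngtP.
Qed.

Section Coefficients.
Variables (R : realType) (M N : nat).
Hypothesis N_gt0 : (0 < N)%N.

(* a_{k+1}(x)^2 without the square roots, hence meaningful even where Psi is not. *)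
Definition acoef2 (x : 'rV[R]_M) (k : nat) : R :=
  \prod_(i < M | (i < k)%N) a_arg N x i.

Lemma a_coef_sqr (x : 'rV[R]_M) k : (forall i, 0 <= a_arg N x i) ->
  a_coef N k.+1 x ^+ 2 = acoef2 x k.
Proof.
by move=> x_def; rewrite /a_coef -prodrXl; apply: eq_bigr => i _; rewrite sqr_sqrtr.
Qed.

Lemma a_coef_ge0 l (x : 'rV[R]_M) : 0 <= a_coef N l x.
Proof. by apply: prodr_ge0 => i _; apply: sqrtr_ge0. Qed.

Lemma a_coefM_close (x y : 'rV[R]_M) k :
  (forall i, 0 <= a_arg N x i) -> (forall i, 0 <= a_arg N y i) ->
  `|a_coef N k.+1 x * a_coef N k.+1 y - 1|
    <= `|acoef2 x k - 1| + `|acoef2 y k - 1| + `|acoef2 x k - 1| * `|acoef2 y k - 1|.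
Proof.
move=> x_def y_def.
apply: le_trans (normB1_le_sqr (mulr_ge0 (a_coef_ge0 _ _) (a_coef_ge0 _ _))) _.
by rewrite exprMn !a_coef_sqr //; apply: normMB1_le.
Qed.

Lemma a_arg_den_ge (i : 'I_M) : N%:R <= (M + N)%:R - i.+1%:R :> R.
Proof. by have i_lt := ltn_ord i; rewrite -natrB ?ler_nat; lia. Qed.

Lemma acoef2S (x : 'rV[R]_M) k (k_lt_M : (k < M)%N) :
  acoef2 x k.+1 = acoef2 x k * a_arg N x (Ordinal k_lt_M).
Proof. exact: big_ord_ltS. Qed.

Lemma acoef2_telescope (x : 'rV[R]_M) k : (k <= M)%N ->
  \sum_(i < M | (i < k)%N) x 0 i ^+ 2 * acoef2 x i + ((M + N)%:R - k%:R) * acoef2 x k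
    = (M + N)%:R.
Proof.
elim: k => [|k IH] k_le; first by rewrite /acoef2 !big1 // subr0 mulr1 add0r.
rewrite (big_ord_ltS _ _ k_le) acoef2S -[RHS](IH (ltnW k_le)) /a_arg /=.
have den_ge := a_arg_den_ge (Ordinal k_le).
have N_pos : 0 < N%:R :> R by rewrite ltr0n.
rewrite /= natrD -!natr1 in den_ge *; field; apply: lt0r_neq0; lra.
Qed.

Lemma a_arg_close (x : 'rV[R]_M) i : x 0 i ^+ 2 <= 2 * M%:R ->
  `|a_arg N x i - 1| <= (2 * M + 1)%:R / N%:R.
Proof.
move=> x_le; have den_ge := a_arg_den_ge i.
have N_pos : 0 < N%:R :> R by rewrite ltr0n.
have num_le : `|1 - x 0 i ^+ 2| <= (2 * M + 1)%:R.
  apply: le_trans (ler_normB _ _) _.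
  by rewrite normr1 ger0_norm ?sqr_ge0 // natrD natrM addrC lerD2r.
rewrite /a_arg addrC addKr normrM normfV.
set D := (_ - _ : R) in den_ge *.
rewrite [`|D|]ger0_norm; last lra.
rewrite ler_pdivrMr; last lra.
by apply: le_trans num_le _; rewrite mulrAC ler_pdivlMr // ler_wpM2l.
Qed.

Definition acoef2_tol : R := M%:R * 2 ^+ M * ((2 * M + 1)%:R / N%:R).

Lemma acoef2_tol_ge0 : 0 <= acoef2_tol.
Proof. by rewrite /acoef2_tol mulr_ge0 ?divr_ge0 // mulr_ge0 // exprn_ge0. Qed.

Lemma acoef2_close (x : 'rV[R]_M) k : (0 < M)%N -> acoef2_tol <= 1 ->
  (forall i, x 0 i ^+ 2 <= 2 * M%:R) -> `|acoef2 x k - 1| <= acoef2_tol.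
Proof.
move=> M_gt0 tol_le1 x_le.
have t_ge0 : 0 <= (2 * M + 1)%:R / N%:R :> R by rewrite divr_ge0.
have t_le_tol : (2 * M + 1)%:R / N%:R <= acoef2_tol.
  rewrite /acoef2_tol -[X in X <= _]mul1r ler_wpM2r //.
  by rewrite mulr_ege1 ?ler1n // exprn_ege1 // ler1n.
have t_le1 : 0 <= ((2 * M + 1)%:R / N%:R : R) <= 1 by apply/andP; split; lra.
have := norm_prodB1_le (index_enum 'I_M) (fun i => (i < k)%N) t_le1
  (fun i => a_arg_close (x_le i)).
have -> : size (index_enum 'I_M) = M by rewrite /index_enum unlock -enumT size_enum_ord.
by rewrite /acoef2_tol mulrAC.
Qed.

Lemma acoef2_last_close (x : 'rV[R]_M) e : (forall i : 'I_M, `|acoef2 x i - 1| <= e) ->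
  N%:R * `|acoef2 x M - 1|
    <= `|M%:R - \sum_(i < M) x 0 i ^+ 2| + (\sum_(i < M) x 0 i ^+ 2) * e.
Proof.
move=> x_close.
have tele : \sum_(i < M) x 0 i ^+ 2 * acoef2 x i + N%:R * acoef2 x M = M%:R + N%:R.
  have := acoef2_telescope x (leqnn M); rewrite natrD addrAC subrr add0r => <-.
  by congr (_ + _); apply: eq_bigl => i; rewrite ltn_ord.
have -> : N%:R * `|acoef2 x M - 1|
    = `|(M%:R - \sum_(i < M) x 0 i ^+ 2) + \sum_(i < M) x 0 i ^+ 2 * (1 - acoef2 x i)|.
  rewrite -[N%:R]ger0_norm // -normrM; congr `|_|.
  have -> : \sum_(i < M) x 0 i ^+ 2 * (1 - acoef2 x i)
      = \sum_(i < M) x 0 i ^+ 2 - \sum_(i < M) x 0 i ^+ 2 * acoef2 x i.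
    by rewrite -sumrB; apply: eq_bigr => i _; ring.
  lra.
apply: le_trans (ler_normD _ _) _; rewrite lerD2l mulr_suml.
apply: le_trans (ler_norm_sum _ _ _) _; apply: ler_sum => i _.
by rewrite normrM ger0_norm ?sqr_ge0 // distrC ler_wpM2l ?sqr_ge0.
Qed.

End Coefficients.

Section Rows.
Variable R : realType.

Lemma sqrt_bounds_mul_close (d c c' : R) : 0 <= d <= 1 ->
  Num.sqrt (1 - d) <= c <= Num.sqrt (1 + d) ->
  Num.sqrt (1 - d) <= c' <= Num.sqrt (1 + d) ->
  `|c * c' - 1| <= d.
Proof.
move=> /andP[d_ge0 d_le1] /andP[c_ge c_le] /andP[c'_ge c'_le].
have sqrt_ge0 := sqrtr_ge0 (1 - d).
have c_ge0 : 0 <= c by apply: le_trans c_ge.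
have c'_ge0 : 0 <= c' by apply: le_trans c'_ge.
have lower : (1 - d) <= c * c'.
  by rewrite -[1 - d]sqr_sqrtr ?subr_ge0 // expr2 ler_pM.
have upper : c * c' <= 1 + d.
  rewrite -[1 + d]sqr_sqrtr; last lra.
  by rewrite expr2 ler_pM.
rewrite ler_norml; apply/andP; split; lra.
Qed.

Lemma overlapE n K (X : 'M[R]_(n, K)) j j' :
  overlap X X j j' = K%:R^-1 * \sum_(k < K) X j k * X j' k.
Proof. by rewrite /overlap !mxE; congr (_ * _); apply: eq_bigr => k _; rewrite !mxE. Qed.

Lemma on_sphereE n K (X : 'M[R]_(n, K)) j :
  on_sphere (row j X) <-> \sum_(k < K) X j k * X j k = K%:R.
Proof.
rewrite /on_sphere (eq_bigr (fun k => X j k * X j k)) //.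
by move=> k _; rewrite mxE expr2.
Qed.

Lemma sum_normM_row_le n K (X : 'M[R]_(n, K)) j j' :
  on_sphere (row j X) -> on_sphere (row j' X) ->
  \sum_(k < K) `|X j k * X j' k| <= K%:R.
Proof.
move=> /on_sphereE X_j /on_sphereE X_j'.
apply: le_trans (sum_normM_le (X j) (X j')) _.
rewrite (eq_bigr _ (fun k _ => expr2 (X j k))) (eq_bigr _ (fun k _ => expr2 (X j' k))).
by rewrite X_j X_j'; lra.
Qed.

End Rows.

Section PsiEntries.
Variables (R : realType) (n N M : nat) (s : 'M[R]_(n, N)) (w : 'M[R]_(n, M)).

Lemma Psi_lshift j i : Psi s w j (lshift M i) = a_coef N M.+1 (row j w) * s j i.
Proof. by rewrite /Psi mxE /psi row_mxEl !mxE. Qed.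

Lemma Psi_rshift j l : Psi s w j (rshift N l) = w j l * a_coef N l.+1 (row j w).
Proof. by rewrite /Psi mxE /psi row_mxEr !mxE. Qed.

Lemma Psi_dot j j' :
  \sum_(k < N + M) Psi s w j k * Psi s w j' k =
  a_coef N M.+1 (row j w) * a_coef N M.+1 (row j' w) * \sum_(i < N) s j i * s j' i
  + \sum_(l < M) (w j l * a_coef N l.+1 (row j w)) * (w j' l * a_coef N l.+1 (row j' w)).
Proof.
rewrite big_split_ord /=; congr (_ + _).
  by rewrite mulr_sumr; apply: eq_bigr => i _; rewrite !Psi_lshift; ring.
by apply: eq_bigr => l _; rewrite !Psi_rshift.
Qed.

Lemma Psi_row_on_sphere j : (0 < N)%N -> Psi_defined N w ->
  on_sphere (row j s) -> on_sphere (row j (Psi s w)).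
Proof.
move=> N_gt0 w_def /on_sphereE s_j; apply/on_sphereE; rewrite Psi_dot s_j.
have row_def : forall i, 0 <= a_arg N (row j w) i by move=> i; apply: w_def.
rewrite -expr2 a_coef_sqr // [(N + M)%N]addnC -(acoef2_telescope N_gt0 (row j w) (leqnn M)).
rewrite natrD addrAC subrr add0r addrC; congr (_ + _); last by rewrite mulrC.
apply: eq_big => [l|l _]; first by rewrite ltn_ord.
by rewrite -a_coef_sqr // mxE; ring.
Qed.

End PsiEntries.

Section PsiOverlap.
Variables (R : realType) (n N M : nat).
Hypotheses (N_gt0 : (0 < N)%N) (M_gt0 : (0 < M)%N).
Variables (Q : 'M[R]_n) (eps d : R) (s : 'M[R]_(n, N)) (w tau : 'M[R]_(n, M)).
Variable c : 'I_n -> R.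
Hypotheses (d_bounds : 0 <= d <= 1) (tol_le1 : acoef2_tol R M N <= 1).
Hypotheses (w_def : Psi_defined N w) (s_in : Qset eps Q s) (tau_in : Qset (eps / 2) Q tau).
Hypotheses (c_bounds : forall j, Num.sqrt (1 - d) <= c j <= Num.sqrt (1 + d))
  (w_eq : forall j i, w j i = c j * tau j i).

Local Notation e := (acoef2_tol R M N).

Lemma row_w_sum_sqr j : \sum_(i < M) row j w 0 i ^+ 2 = c j ^+ 2 * M%:R.
Proof.
have /on_sphereE tau_j := tau_in.1 j.
rewrite -tau_j mulr_sumr; apply: eq_bigr => i _; rewrite mxE w_eq; ring.
Qed.

Lemma row_w_sqr_le j i : row j w 0 i ^+ 2 <= 2 * M%:R.
Proof.
have cc_close := sqrt_bounds_mul_close d_bounds (c_bounds j) (c_bounds j).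
have c2_le : c j ^+ 2 <= 2.
  by move: cc_close; rewrite -expr2 ler_norml => /andP[_]; case/andP: d_bounds; lra.
apply: le_trans (_ : \sum_(k < M) row j w 0 k ^+ 2 <= _).
  by rewrite (bigD1 i) //= lerDl sumr_ge0 // => k _; apply: sqr_ge0.
by rewrite row_w_sum_sqr ler_wpM2r.
Qed.

Lemma row_acoef2_close j k : `|acoef2 N (row j w) k - 1| <= e.
Proof. by have := acoef2_close N_gt0 k M_gt0 tol_le1 (row_w_sqr_le j). Qed.

Lemma row_acoef2_last_close j :
  N%:R * `|acoef2 N (row j w) M - 1| <= M%:R * d + 2 * M%:R * e.
Proof.
have cc_close := sqrt_bounds_mul_close d_bounds (c_bounds j) (c_bounds j).
rewrite -expr2 in cc_close.
apply: le_trans (acoef2_last_close N_gt0 (fun i => row_acoef2_close j i)) _.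
rewrite row_w_sum_sqr; apply: lerD.
  by rewrite -{1}[M%:R]mul1r -mulrBl normrM distrC ger0_norm // mulrC ler_wpM2l.
rewrite ler_wpM2r ?acoef2_tol_ge0 // ler_wpM2r //.
by move: cc_close; rewrite ler_norml => /andP[_]; case/andP: d_bounds; lra.
Qed.

Lemma Psi_head_close j j' :
  `|a_coef N M.+1 (row j w) * a_coef N M.+1 (row j' w) * \sum_(i < N) s j i * s j' i
    - N%:R * Q j j'| <= N%:R * eps + 3 * (M%:R * d + 2 * M%:R * e).
Proof.
set P := \sum_(i < N) _; set A := a_coef N M.+1 _ * _.
have N_pos : 0 < N%:R :> R by rewrite ltr0n.
have P_close : `|P - N%:R * Q j j'| <= N%:R * eps.
  by rewrite -ler_norm_invMB // -overlapE; apply: s_in.2.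
have P_le : `|P| <= N%:R.
  by apply: le_trans (ler_norm_sum _ _ _) (sum_normM_row_le (s_in.1 j) (s_in.1 j')).
have A_close : N%:R * `|A - 1| <= 3 * (M%:R * d + 2 * M%:R * e).
  apply: le_trans (ler_wpM2l (ltW N_pos) (a_coefM_close M (w_def j) (w_def j'))) _.
  have bj := row_acoef2_last_close j; have bj' := row_acoef2_last_close j'.
  have b'_le1 := le_trans (row_acoef2_close j' M) tol_le1.
  have := ler_pM (mulr_ge0 (ltW N_pos) (normr_ge0 _)) (normr_ge0 _) bj b'_le1.
  lra.
have -> : A * P - N%:R * Q j j' = (P - N%:R * Q j j') + (A - 1) * P by ring.
apply: le_trans (ler_normD _ _) _; apply: lerD => //.
rewrite normrM; apply: le_trans A_close.
by rewrite mulrC ler_wpM2r.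
Qed.

Lemma Psi_tail_close j j' :
  `|\sum_(l < M) (w j l * a_coef N l.+1 (row j w)) * (w j' l * a_coef N l.+1 (row j' w))
    - M%:R * Q j j'| <= M%:R * (eps / 2) + M%:R * d + 6 * M%:R * e.
Proof.
set T := \sum_(l < M) tau j l * tau j' l.
have M_pos : 0 < M%:R :> R by rewrite ltr0n.
have T_close : `|T - M%:R * Q j j'| <= M%:R * (eps / 2).
  by rewrite -ler_norm_invMB // -overlapE; apply: tau_in.2.
have tau_le := sum_normM_row_le (tau_in.1 j) (tau_in.1 j').
have cc_close := sqrt_bounds_mul_close d_bounds (c_bounds j) (c_bounds j').
have cc_le2 : `|c j * c j'| <= 2.
  by rewrite -[c j * c j'](subrK 1); apply: le_trans (ler_normD _ _) _;
    rewrite normr1; case/andP: d_bounds; lra.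
have aa_close l : `|a_coef N l.+1 (row j w) * a_coef N l.+1 (row j' w) - 1| <= 3 * e.
  apply: le_trans (a_coefM_close _ (w_def j) (w_def j')) _.
  have := ler_pM (normr_ge0 _) (normr_ge0 _) (row_acoef2_close j l)
    (le_trans (row_acoef2_close j' l) tol_le1).
  have := row_acoef2_close j l; have := row_acoef2_close j' l; lra.
have -> : \sum_(l < M) (w j l * a_coef N l.+1 (row j w)) * (w j' l * a_coef N l.+1 (row j' w))
    = \sum_(l < M) (c j * c j') * (tau j l * tau j' l)
        * (a_coef N l.+1 (row j w) * a_coef N l.+1 (row j' w) - 1) + c j * c j' * T.
  by rewrite /T mulr_sumr -big_split /=; apply: eq_bigr => l _; rewrite !w_eq; ring.
set W := \sum_(l < M) _.
have W_le : `|W| <= 6 * M%:R * e.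
  apply: le_trans (ler_norm_sum _ _ _) _.
  apply: le_trans (_ : \sum_(l < M) 6 * e * `|tau j l * tau j' l| <= _).
    apply: ler_sum => l _; rewrite normrM (normrM (c j * c j')) mulrAC ler_wpM2r //.
    by have := ler_pM (normr_ge0 _) (normr_ge0 _) cc_le2 (aa_close l); lra.
  by rewrite -mulr_sumr mulrAC ler_wpM2r ?acoef2_tol_ge0 // ler_wpM2l.
have -> : W + c j * c j' * T - M%:R * Q j j'
    = W + (c j * c j' - 1) * T + (T - M%:R * Q j j') by ring.
have cT_le : `|(c j * c j' - 1) * T| <= d * M%:R.
  by rewrite normrM ler_pM // (le_trans (ler_norm_sum _ _ _) tau_le).
have := ler_normD (W + (c j * c j' - 1) * T) (T - M%:R * Q j j').
have := ler_normD W ((c j * c j' - 1) * T).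
lra.
Qed.

Lemma Psi_overlap_close j j' : 4 * d + 12 * e <= eps / 2 ->
  `|overlap (Psi s w) (Psi s w) j j' - Q j j'| <= eps.
Proof.
move=> slack.
have NM_pos : 0 < (N + M)%:R :> R by rewrite ltr0n addn_gt0 N_gt0.
rewrite overlapE Psi_dot ler_norm_invMB // natrD.
have head := Psi_head_close j j'; have tail := Psi_tail_close j j'.
set H := _ * \sum_(i < N) _ in head *; set T := \sum_(l < M) _ in tail *.
have -> : H + T - (N%:R + M%:R) * Q j j' = (H - N%:R * Q j j') + (T - M%:R * Q j j') by ring.
have := ler_wpM2l (ler0n R M) slack.
have := ler_normD (H - N%:R * Q j j') (T - M%:R * Q j j').
lra.
Qed.

End PsiOverlap.

Theorem lemma10 (R : realType) (n M : nat) (Q : 'M[R]_n) :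
  (1 <= n)%N -> (1 <= M)%N ->
  Q^T = Q -> psd Q -> (forall j, Q j j = 1) ->
  forall eps : R, 0 < eps ->
  exists N0 : nat, forall N : nat, (N0 <= N)%N ->
  exists delta : R, 0 < delta < eps /\
    forall (s : 'M[R]_(n, N)) (w : 'M[R]_(n, M)),
      Psi_defined N w ->
      Qset eps Q s ->
      Omega_set eps delta Q w ->
      Qset eps Q (Psi s w).
Proof.
move=> _ M_gt0 _ _ _ eps eps_gt0.
(* Both delta and the tolerance of the b_k are taken <= r; the proof needs
   4 delta + 12 tol <= eps / 2. *)
pose r := eps / (32 + eps).
have r_gt0 : 0 < r by rewrite divr_gt0 //; lra.
have r_small : 32 * r <= eps /\ r < 1.
  have r_eq : r * (32 + eps) = eps by rewrite /r mulfVK //; apply: lt0r_neq0; lra.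
  split; nra.
pose C : R := M%:R * 2 ^+ M * (2 * M + 1)%:R.
have C_ge0 : 0 <= C by rewrite !mulr_ge0 ?exprn_ge0.
exists (Num.Def.archi_bound (C / r)).+1 => N N_ge.
have N_gt0 : (0 < N)%N by apply: leq_trans N_ge.
have tol_le_r : acoef2_tol R M N <= r.
  have N_pos : 0 < N%:R :> R by rewrite ltr0n.
  have : C / r <= N%:R.
    apply: ltW (lt_le_trans (archi_boundP (divr_ge0 C_ge0 (ltW r_gt0))) _).
    by rewrite ler_nat ltnW.
  by rewrite /acoef2_tol mulrA -/C !ler_pdivrMr //; lra.
exists r; split; first by apply/andP; split; lra.
move=> s w w_def s_in [tau [c [tau_in [c_bounds w_eq]]]].
have r_bounds : 0 <= r <= 1 by apply/andP; split; lra.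
split=> [j | j j']; first exact: Psi_row_on_sphere N_gt0 w_def (s_in.1 j).
apply: (Psi_overlap_close N_gt0 M_gt0 r_bounds _ w_def s_in tau_in c_bounds w_eq); lra.
Qed.
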